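(* Let $T$ be a forest without isolated vertices of order at least $3$, and let $P_T$ be the set of pendant vertices of $T$ that are adjacent to a vertex of degree at least $2$. Then there is a $\delta$-sequence $\{\mathcal T_i\}_{i=1}^s$ of $T$ such that $\tilde z_i(T)\ge 0$ for all $2\le i\le s$ and $\tilde z_s(T)\ge |P_T|-|N_T(P_T)|$.
   Context: $N_T(S)$ denotes the set of all neighbours of vertices of $S$ in $T$; a pendant vertex is a vertex of degree 1. $G+H$ denotes disjoint union, $mK_1$ the edgeless graph on $m$ vertices, $K_r$ the complete graph. $\delta$-sequence: Let $G$ have order $p$ with $1\le\delta(G)\le p-2$. Set $\mathcal G_1=G_1=G$, $m_1=0$. For each $i$, write $\mathcal G_i=m_iK_1+G_i$, where $m_i\ge0$ is the number of isolated vertices of $\mathcal G_i$ and $G_i$ has no isolated vertices; put $\delta_i=\delta(G_i)$. If $\mathcal G_i$ is neither of the form $mK_1$ ($m\ge1$) nor $mK_1+K_r$ ($m\ge0$, $r\ge2$), choose a vertex $u_i$ of $G_i$ with $\deg_{G_i}(u_i)=\delta_i$ and let $\mathcal G_{i+1}$ be obtained from $G_i$ by deleting $u_i$ together with all its neighbours in $G_i$. Stop at the first index $s$ ($s\ge2$) for which $\mathcal G_s$ is $m_sK_1$ with $m_s\ge1$ (then set $\delta_s=0$) or $m_sK_1+K_r$ with $m_s\ge0$, $r\ge2$ (then $\delta_s=r-1$). The resulting $\{\mathcal G_i\}_{i=1}^s$ is a $\delta$-sequence of $G$. Define $\tilde y_j(G)=m_j+1-\delta_j$ for $1\le j\le s$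 and $\tilde z_i(G)=\sum_{j=2}^i\tilde y_j(G)$. *)

(* A finite simple graph is a symmetric irreflexive relation
   e : rel T on a finType T; subgraphs considered here are induced subgraphs,
   represented by their vertex sets S : {set T}. *)
From mathcomp Require Import all_boot all_order all_algebra.
Set Implicit Arguments. Unset Strict Implicit. Unset Printing Implicit Defensive.

Section Graphs.
Variables (T : finType) (e : rel T).

Definition simple_graph : Prop := symmetric e /\ irreflexive e.

Definition forest : Prop :=
  forall c : seq T, uniq c -> 2 < size c -> ~~ cycle e c.

Definition deg (S : {set T}) (v : T) : nat := #|[set w in S | e v w]|.

(* vertices of G[S] that are not isolated: V(G_i) when G[S] = m K_1 + G_i *)
Definition core (S : {set T}) : {set T} := [set v in S | 0 < deg S v].

Definition nisol (S : {set T}) : nat := #|S :\: core S|.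

Definition mindeg (C : {set T}) : nat :=
  if C == set0 then 0 else \big[minn/#|T|]_(v in C) deg C v.

(* delta_i: the minimum degree of G_i (= 0 for m K_1, = r-1 for m K_1 + K_r) *)
Definition delta_of (S : {set T}) : nat := mindeg (core S).

(* G[S] is of the form m K_1 (m >= 1) or m K_1 + K_r (m >= 0, r >= 2) *)
Definition terminal (S : {set T}) : bool :=
  ((S != set0) && (core S == set0)) ||
  ((1 < #|core S|) &&
   [forall v in core S, forall w in core S, (v != w) ==> e v w]).

Definition cnbhd (C : {set T}) (u : T) : {set T} := u |: [set w in C | e u w].

(* S = [:: S_1; ...; S_s] : the vertex sets of the delta-sequence G_1,...,G_s *)
Definition Sq (S : seq {set T}) (i : nat) : {set T} := nth set0 S i.-1.

Definition delta_sequence (S : seq {set T}) : Prop :=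
  [/\ 2 <= size S,
      Sq S 1 = [set: T],
      terminal (Sq S (size S)) &
      forall i, 1 <= i -> i < size S ->
        ~~ terminal (Sq S i) /\
        exists u, [/\ u \in core (Sq S i),
                      deg (core (Sq S i)) u = delta_of (Sq S i) &
                      Sq S i.+1 = core (Sq S i) :\: cnbhd (core (Sq S i)) u]].

Definition ytilde (S : seq {set T}) (j : nat) : int :=
  (nisol (Sq S j))%:Z + 1 - (delta_of (Sq S j))%:Z.

Definition ztilde (S : seq {set T}) (i : nat) : int :=
  \sum_(2 <= j < i.+1) ytilde S j.

Definition PT : {set T} :=
  [set v | (deg [set: T] v == 1) && [exists w, e v w && (2 <= deg [set: T] w)]].

Definition NT (A : {set T}) : {set T} := [set w | [exists v in A, e v w]].

End Graphs.

From mathcomp Require Import all_boot all_order all_algebra zify.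
Set Implicit Arguments. Unset Strict Implicit. Unset Printing Implicit Defensive.
Import Order.TTheory GRing.Theory Num.Theory.

(* Proof strategy.
   1. In a forest every nonempty induced subgraph has a vertex of degree at
      most one: otherwise uniq paths could be extended forever, since a
      vertex adjacent to a non-consecutive vertex of a path closes a cycle.
      Hence delta_i = 1 whenever G_i is nonempty, so every ytilde_j >= 0 and
      every delta-step removes a vertex u of degree one with its neighbour.
   2. A clique of a forest with at least two vertices is a single edge.
   3. Consider the potential Psi(X) = |P /\ X| - |N(P) /\ X| of a vertex set.
      It is additive under splitting X, is at most 0 on an edge (the
      neighbour of a pendant vertex of P is in N(P), and N(P) misses P), and
      is at most the number of isolated vertices on the isolated part.
      So Psi(X) <= y(X) + Psi(X') for a delta-step X -> X', and
      Psi(X) <= y(X) when G[X] is terminal.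
   4. Building the delta-sequence greedily from any nonempty X by induction on
      |X| and telescoping gives Psi(X) <= sum of the y's; for X = V(T) the
      first term y(V(T)) vanishes, which is exactly the theorem. *)

Lemma card_setI_split (T : finType) (Q A B : {set T}) :
  A \subset B -> #|Q :&: B| = #|Q :&: A| + #|Q :&: (B :\: A)|.
Proof.
move=> AB; rewrite -(cardsID A (Q :&: B)); congr (_ + _); apply: eq_card => v;
  by rewrite !inE; case: (v \in A) (v \in B) (v \in Q) (subsetP AB v) => [] [] [] // /(_ isT).
Qed.

Section Forest.
Variables (T : finType) (e : rel T).
Hypothesis esym : symmetric e.
Hypothesis eirr : irreflexive e.
Hypothesis efor : forest e.

Local Notation inC C := (fun v => v \in C).

Lemma no_chord x y p1 z p2 :
  uniq (x :: y :: p1 ++ z :: p2) -> path e x (y :: p1 ++ z :: p2) -> ~~ e x z.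
Proof.
have -> : y :: p1 ++ z :: p2 = rcons (y :: p1) z ++ p2 by rewrite cat_rcons.
rewrite -cat_cons cat_uniq cat_path => /and3P[u _ _] /andP[pa _].
apply: contra (efor u _) => [exz|]; last by rewrite /= size_rcons.
by rewrite /= rcons_path last_rcons (esym z x) exz andbT.
Qed.

Lemma extend_path (C : {set T}) :
  (forall v, v \in C -> 2 <= deg e C v) ->
  forall x p, uniq (x :: p) -> path e x p -> all (inC C) (x :: p) ->
  exists z, [&& uniq (z :: x :: p), path e z (x :: p) & all (inC C) (z :: x :: p)].
Proof.
move=> hC x p up pp ap; have xC : x \in C by case/andP: ap.
have hx := hC x xC.
have [z [zNx zC exz]] : exists z, [/\ z \notin take 1 p, z \in C & e x z].
  have : 0 < #|[set w in C | e x w] :\: [set w in take 1 p]|.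
    have hB : #|[set w in take 1 p]| <= 1.
      by rewrite cardsE (leq_trans (card_size _)) // size_take; case: ltnP.
    have := subset_leq_card (subsetIr [set w in C | e x w] [set w in take 1 p]).
    by rewrite cardsD; move: hx; rewrite /deg; lia.
  case/card_gt0P=> z; rewrite !inE => /andP[zNp /andP[zC exz]].
  by exists z.
have zx : z != x by apply: contraTneq exz => ->; rewrite eirr.
have zNp : z \notin p.
  case: p {ap} up pp zNx => [//|y p'] up pp /=; rewrite take0 mem_seq1 => zy.
  rewrite inE (negbTE zy) /=; apply/negP => zp.
  by move: up pp exz; case/splitPr: zp => p1 p2 up pp; apply/negP; exact: no_chord up pp.
exists z; rewrite /= inE negb_or zx zNp (esym z x) exz zC.
by move: up pp ap => /= -> -> ->.
Qed.

Lemma long_paths (C : {set T}) :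
  C != set0 -> (forall v, v \in C -> 2 <= deg e C v) ->
  forall n, exists x p,
    [&& size p == n, uniq (x :: p), path e x p & all (inC C) (x :: p)].
Proof.
move=> /set0Pn[x0 x0C] hC; elim=> [|n [x [p /and4P[/eqP sz up pp ap]]]].
  by exists x0, [::]; rewrite /= x0C.
have [z /and3P[uz pz az]] := extend_path hC up pp ap.
by exists z, (x :: p); rewrite uz pz az /= sz eqxx.
Qed.

(* Every nonempty induced subgraph of a forest has a vertex of degree at most
   one: a uniq path has at most #|T| vertices. *)
Lemma low_degree_vertex (C : {set T}) :
  C != set0 -> exists2 v, v \in C & deg e C v <= 1.
Proof.
move=> C0; case: (boolP [forall v in C, 2 <= deg e C v]) => [/forall_inP hC|].
  have [x [p /and4P[/eqP sz up _ _]]] := long_paths C0 hC #|T|.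
  by have := max_card (mem (x :: p)); rewrite (card_uniqP up) /= sz ltnn.
by rewrite negb_forall_in => /exists_inP[v vC]; rewrite -ltnNge ltnS; exists v.
Qed.

Lemma core_sub (X : {set T}) : core e X \subset X.
Proof. by apply/subsetP => v; rewrite inE => /andP[]. Qed.

Lemma deg_core (X : {set T}) v : v \in X -> deg e (core e X) v = deg e X v.
Proof.
move=> vX; apply: eq_card => w; rewrite !inE.
case wX: (w \in X); case evw: (e v w); rewrite ?andbF //=.
by rewrite andbT card_gt0; apply/set0Pn; exists v; rewrite inE vX esym.
Qed.

Lemma delta_one (X : {set T}) : core e X != set0 -> delta_of e X = 1.
Proof.
move=> C0; rewrite /delta_of /mindeg (negbTE C0); apply/eqP; rewrite eqn_leq.
have [v vC hv] := low_degree_vertex C0.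
have min_le : \big[minn/#|T|]_(w in core e X) deg e (core e X) w <= deg e (core e X) v.
  exact: (bigmin_le_cond _ (deg e (core e X)) vC).
rewrite (leq_trans min_le hv) /=.
apply: (big_ind (fun n => 0 < n)) => [||w wC].
- by apply/card_gt0P; exists v.
- by move=> a b ha hb; rewrite leq_min ha hb.
by rewrite deg_core ?(subsetP (core_sub X)) //; case/setIdP: wC.
Qed.

Lemma delta_le1 (X : {set T}) : delta_of e X <= 1.
Proof.
have [C0|C0] := eqVneq (core e X) set0; last by rewrite delta_one.
by rewrite /delta_of C0 /mindeg eqxx.
Qed.

(* A clique with at least two vertices in a forest is a single edge, since
   three pairwise adjacent vertices form a cycle. *)
Lemma clique_edge (C : {set T}) :
  1 < #|C| -> [forall v in C, forall w in C, (v != w) ==> e v w] ->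
  exists u w, e u w /\ C = [set u; w].
Proof.
move=> hC /forall_inP hK.
have adj v w : v \in C -> w \in C -> v != w -> e v w.
  by move=> vC wC; move/forall_inP: (hK v vC) => /(_ w wC)/implyP.
have [u uC] : exists u, u \in C by apply/card_gt0P; rewrite ltnW.
have [w] : exists w, w \in C :\ u by apply/card_gt0P; move: hC; rewrite (cardsD1 u) uC.
rewrite in_setD1 => /andP[wu wC].
exists u, w; split; first by rewrite adj // eq_sym.
apply/setP => x; rewrite in_set2; apply/idP/idP => [xC|/orP[]/eqP-> //].
apply/negPn/negP; rewrite negb_or => /andP[xu xw].
apply: (negP (efor (c := [:: u; w; x]) _ _)) => //.
  by rewrite /= !inE negb_or eq_sym wu eq_sym xu eq_sym xw.
by rewrite /= !adj // eq_sym.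
Qed.

Lemma cnbhd_deg1 (C : {set T}) u : deg e C u = 1 ->
  exists2 w, w \in C & e u w /\ cnbhd e C u = [set u; w].
Proof.
move/eqP/cards1P=> [w hw]; have : w \in [set w in C | e u w] by rewrite hw set11.
by rewrite inE => /andP[wC euw]; exists w; rewrite // /cnbhd hw.
Qed.

Lemma edge_terminal (X : {set T}) u w :
  e u w -> core e X = [set u; w] -> terminal e X.
Proof.
move=> euw CX; have uw : u != w by apply: contraTneq euw => ->; rewrite eirr.
apply/orP; right; rewrite CX cards2 uw /=.
apply/forall_inP => x; rewrite in_set2 => hx; apply/forall_inP => y.
rewrite in_set2 => hy; apply/implyP.
by case/orP: hx hy => /eqP-> /orP[]/eqP->; rewrite ?eqxx // esym.
Qed.

Local Notation P := (PT e).
Local Notation NP := (NT e (PT e)).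

Lemma PT_neighbour p a b : p \in P -> e p a -> e p b -> a = b.
Proof.
rewrite inE => /andP[/cards1P[z hz] _] epa epb.
have : a \in [set w in [set: T] | e p w] by rewrite !inE epa.
have : b \in [set w in [set: T] | e p w] by rewrite !inE epb.
by rewrite hz !inE => /eqP-> /eqP->.
Qed.

Lemma PT_NT p a : p \in P -> e p a -> a \in NP.
Proof. by move=> pP epa; rewrite inE; apply/exists_inP; exists p. Qed.

(* P and N(P) are disjoint: the neighbour of a vertex of P has degree >= 2. *)
Lemma NT_notin_PT a : a \in NP -> a \notin P.
Proof.
rewrite inE => /exists_inP[p pP epa].
move: (pP); rewrite inE => /andP[_ /existsP[w /andP[epw hw]]].
by rewrite (PT_neighbour pP epa epw) inE negb_and neq_ltn hw orbT.
Qed.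

(* The potential of a vertex set, and y(X) = m + 1 - delta for G[X], so that
   ytilde_j is y of the j-th set of the sequence. *)
Definition Psi (X : {set T}) : int := (#|P :&: X|)%:Z - (#|NP :&: X|)%:Z.
Definition yval (X : {set T}) : int := (nisol e X)%:Z + 1 - (delta_of e X)%:Z.

Lemma Psi_split (A B : {set T}) : A \subset B -> Psi B = (Psi A + Psi (B :\: A))%R.
Proof. by move=> AB; rewrite /Psi !(card_setI_split _ AB); lia. Qed.

Lemma Psi_isolated (X : {set T}) : (Psi X <= (nisol e X)%:Z + Psi (core e X))%R.
Proof.
rewrite (Psi_split (core_sub X)).
have : #|P :&: (X :\: core e X)| <= nisol e X by apply/subset_leq_card/subsetIr.
by rewrite /Psi; lia.
Qed.

(* An edge has nonpositive potential: if one end is in P, the other end is in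
   N(P) and hence not in P. *)
Lemma Psi_edge u w : e u w -> (Psi [set u; w] <= 0)%R.
Proof.
wlog uP : u w / u \in P => [hwlog euw|euw].
  case: (boolP (u \in P)) => [uP|uNP]; first exact: hwlog.
  case: (boolP (w \in P)) => [wP|wNP]; first by rewrite setUC hwlog // esym.
  rewrite /Psi; have -> : P :&: [set u; w] = set0.
    apply/setP => v; rewrite in_setI in_set2 in_set0.
    by case: eqP => [->|_]; case: eqP => [->|_]; rewrite ?(negbTE uNP) ?(negbTE wNP) ?andbF.
  by rewrite cards0; lia.
have wNP := PT_NT uP euw; have wNP' := NT_notin_PT wNP.
have : #|P :&: [set u; w]| <= #|[set u]|.
  apply/subset_leq_card/subsetP => v; rewrite in_setI in_set2 in_set1.
  by case: eqP => [->//|_]; case: eqP => [->|_]; rewrite ?(negbTE wNP') ?andbF.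
have : #|[set w]| <= #|NP :&: [set u; w]|.
  apply/subset_leq_card/subsetP => v; rewrite in_set1 => /eqP->.
  by rewrite in_setI wNP set22.
by rewrite /Psi !cards1; lia.
Qed.

Lemma yval_ge0 (X : {set T}) : (0 <= yval X)%R.
Proof. by have := delta_le1 X; rewrite /yval; lia. Qed.

(* For a terminal G[X] the potential is bounded by its own contribution:
   either G[X] is edgeless, or its core is a clique of the forest, i.e. an
   edge. *)
Lemma Psi_terminal (X : {set T}) : terminal e X -> (Psi X <= yval X)%R.
Proof.
move=> tX; have := Psi_isolated X; rewrite /yval.
have [C0|C0] := eqVneq (core e X) set0.
  by rewrite C0 /Psi setI0 cards0 /delta_of C0 /mindeg eqxx; lia.
case/orP: tX => [/andP[_ C0']|/andP[hC hK]]; first by rewrite C0' in C0.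
have [u [w [euw CX]]] := clique_edge hC hK.
by have := Psi_edge euw; rewrite delta_one // -CX; lia.
Qed.

(* One delta-step X -> X' removes a degree-one vertex u of the core together
   with its neighbour; this loses at most y(X) of potential. *)
Lemma Psi_step (X : {set T}) u :
  u \in core e X -> deg e (core e X) u = 1 ->
  (Psi X <= yval X + Psi (core e X :\: cnbhd e (core e X) u))%R.
Proof.
move=> uC du; have [w wC [euw Nu]] := cnbhd_deg1 du.
have NuC : cnbhd e (core e X) u \subset core e X.
  by rewrite Nu; apply/subsetP => v; rewrite in_set2 => /orP[]/eqP->.
have C0 : core e X != set0 by apply/set0Pn; exists u.
have := Psi_isolated X; rewrite (Psi_split NuC) /yval delta_one //.
by have := Psi_edge euw; rewrite -Nu; lia.
Qed.

Definition delta_step (X Y : {set T}) : bool :=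
  ~~ terminal e X && [exists u in core e X,
    (deg e (core e X) u == delta_of e X) && (Y == core e X :\: cnbhd e (core e X) u)].

Lemma core_leaf (X : {set T}) : X != set0 -> ~~ terminal e X ->
  exists2 u, u \in core e X & deg e (core e X) u = 1.
Proof.
move=> X0 tX; have C0 : core e X != set0.
  by apply: contraNneq tX => C0; rewrite /terminal X0 C0 eqxx.
have [u uC du] := low_degree_vertex C0; exists u => //; apply/eqP.
by rewrite eqn_leq du deg_core ?(subsetP (core_sub X)) //; case/setIdP: uC.
Qed.

Lemma step_nonempty (X : {set T}) u : ~~ terminal e X ->
  u \in core e X -> deg e (core e X) u = 1 ->
  core e X :\: cnbhd e (core e X) u != set0.
Proof.
move=> tX uC du; have [w wC [euw Nu]] := cnbhd_deg1 du.
apply: contraNneq tX => /eqP; rewrite setD_eq0 Nu => CX.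
apply: (edge_terminal euw); apply/eqP; rewrite eqEsubset CX.
by apply/subsetP => v; rewrite in_set2 => /orP[]/eqP->.
Qed.

Lemma step_smaller (X : {set T}) u : u \in core e X ->
  #|core e X :\: cnbhd e (core e X) u| < #|X|.
Proof.
move=> uC; rewrite (cardsD1 u X) (subsetP (core_sub X) u uC) ltnS.
apply/subset_leq_card/subsetP => v; rewrite in_setD1 in_setD /cnbhd in_setU1 negb_or.
by case/andP=> /andP[-> _] /(subsetP (core_sub X)) ->.
Qed.

Lemma greedy_sequence n (X : {set T}) : #|X| <= n -> X != set0 ->
  exists L, path delta_step X L && terminal e (last X L) /\
            (Psi X <= \sum_(Y <- X :: L) yval Y)%R.
Proof.
elim: n X => [|n IH] X hX X0; first by move: X0; rewrite -card_gt0; case: #|X| hX.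
have [tX|tX] := boolP (terminal e X).
  by exists [::]; rewrite /= tX big_seq1 Psi_terminal.
have [u uC du] := core_leaf X0 tX.
set X' := core e X :\: cnbhd e (core e X) u.
have hX' : #|X'| <= n by rewrite -ltnS (leq_trans (step_smaller uC)).
have [L [/andP[pL tL] hL]] := IH X' hX' (step_nonempty tX uC du).
exists (X' :: L); split.
  rewrite /= pL tL /delta_step tX !andbT /=; apply/exists_inP; exists u => //.
  by rewrite du delta_one ?eqxx //; apply/set0Pn; exists u.
by rewrite big_cons (le_trans (Psi_step uC du)) // lerD2l.
Qed.

Lemma delta_sequence_of_path (L : seq {set T}) :
  ~~ terminal e [set: T] -> path delta_step [set: T] L ->
  terminal e (last [set: T] L) -> delta_sequence e ([set: T] :: L).
Proof.
move=> tT /pathP pL tL; split => //.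
- by case: L pL tL => //= _; rewrite (negbTE tT).
- by rewrite /Sq /= -last_nth.
move=> [|i] // _ hi; have /andP[ti /exists_inP[u uC /andP[/eqP du /eqP step]]] := pL set0 i hi.
by split=> //; exists u.
Qed.

Section WholeGraph.
Hypothesis no_isolated : forall v : T, exists w, e v w.
Hypothesis order_ge3 : 3 <= #|T|.

Lemma core_full : core e [set: T] = [set: T].
Proof.
apply/setP => v; rewrite !inE /deg card_gt0; have [w evw] := no_isolated v.
by apply/set0Pn; exists w; rewrite inE in_setT.
Qed.

(* G itself is not terminal: it has no isolated vertex and, being a forest
   on at least three vertices, it is not complete. *)
Lemma full_nonterminal : ~~ terminal e [set: T].
Proof.
rewrite /terminal core_full andNb /=; apply/negP => /andP[hC hK].
have [u [w [_ Tuw]]] := clique_edge hC hK.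
by move: order_ge3; rewrite -cardsT Tuw cards2; case: (u != w).
Qed.

Lemma yval_full : yval [set: T] = 0%R.
Proof.
rewrite /yval delta_one; last by rewrite core_full -card_gt0 cardsT (leq_trans _ order_ge3).
by rewrite /nisol core_full setDv cards0.
Qed.

End WholeGraph.
End Forest.

Lemma ztilde_last (T : finType) (e : rel T) (X : {set T}) (L : seq {set T}) :
  ztilde e (X :: L) (size (X :: L)) = (\sum_(Y <- L) yval e Y)%R.
Proof. by rewrite /ztilde /= !big_add1 /= (big_nth set0). Qed.

Local Open Scope ring_scope.

Theorem mainTheorem6 (T : finType) (e : rel T) :
  simple_graph e -> forest e ->
  (forall v : T, exists w, e v w) ->
  (3 <= #|T|)%N ->
  exists S : seq {set T},
    delta_sequence e S /\
    (forall i, (2 <= i <= size S)%N -> 0 <= ztilde e S i) /\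
    ztilde e S (size S) >= (#|PT e|)%:Z - (#|NT e (PT e)|)%:Z.
Proof.
move=> [esym eirr] efor no_isolated order_ge3.
have T0 : [set: T] != set0 by rewrite -card_gt0 cardsT (leq_trans _ order_ge3).
have [L [/andP[pL tL] hL]] := greedy_sequence esym eirr efor (max_card (mem [set: T])) T0.
have tT := full_nonterminal efor no_isolated order_ge3.
exists ([set: T] :: L); split; [|split].
- exact: delta_sequence_of_path.
- by move=> i _; apply: sumr_ge0 => j _; apply: yval_ge0.
rewrite ztilde_last; move: hL.
by rewrite big_cons (yval_full esym eirr efor no_isolated order_ge3) add0r /Psi !setIT.
Qed.
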